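(* Let $G$ be a nilpotent group of class at most $2$ (so $[G,G]$ is central), let $w=(w_1,\dots,w_l)\in G^l$ be a word of length $l$ over $G$, and let $x\in G$. For $0\le i\le l$ let $w_{\le i}=(w_1,\dots,w_i)$ be the $i$-th prefix of $w$, and set $A=\{[x,\mathrm{val}(w_{\le i})] : 0\le i\le l\}\subseteq[G,G]$. Then for every word $u$ obtained from $w$ by inserting $n$ occurrences of the letter $x$ (at arbitrary positions), we have $\mathrm{val}(u)\in \mathrm{val}(x^nw)\,A^n$. Moreover, if $\mathrm{val}(u)\in\mathrm{val}(x^nw)\,B^n$ for some subset $B\subseteq A$, then there is a word $u'$ obtained from $w$ by inserting $n$ occurrences of $x$ such that these occurrences form at most $|B|$ maximal blocks of consecutive letters $x$ (i.e. powers $x^{c}$), and $\mathrm{val}(u')=\mathrm{val}(u)$.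
   Context: A word over $G$ is a finite sequence of elements of $G$; $\mathrm{val}$ of a word is the product of its letters in $G$ (the empty word has value $1$); $x^nw$ is the word consisting of $n$ letters $x$ followed by $w$. Commutators are taken with the convention $[x,g]=g^{-1}x^{-1}gx$, so that $gx=xg[x,g]$. For a subset $B$ of the abelian group $[G,G]$, $B^n=\{c_1c_2\cdots c_n: c_i\in B\}$, and $gB^n=\{gc: c\in B^n\}$. *)

From HB Require Import structures.
From mathcomp Require Import all_boot.

Set Implicit Arguments.
Unset Strict Implicit.
Unset Printing Implicit Defensive.

Section Words.
Variable G : groupType.

Definition wval (w : seq G) : G := foldr (@mul G) (@one G) w.

Definition pcomm (x g : G) : G :=
  mul (inv g) (mul (inv x) (mul g x)).

Definition class_le2 : Prop :=
  forall a b c : G, mul (pcomm a b) c = mul c (pcomm a b).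

Definition Aset (x : G) (w : seq G) : seq G :=
  [seq pcomm x (wval (take i w)) | i <- iota 0 (size w).+1].

(* g \in h B^n  (B given as a list of its elements) *)
Definition in_coset_pow (g h : G) (B : seq G) (n : nat) : Prop :=
  exists cs : seq G, [/\ size cs = n, all (fun c => c \in B) cs & g = mul h (wval cs)].

(* u is obtained from w by inserting n letters x; the bitseq m marks the
   positions of u that belong to w (true) and the inserted x's (false). *)
Definition insertion (x : G) (n : nat) (w u : seq G) (m : bitseq) : Prop :=
  [/\ size m = size u, mask m u = w, count negb m = n &
      forall i, i < size u -> nth true m i = false -> nth x u i = x].

Definition inserted (x : G) (n : nat) (w u : seq G) : Prop :=
  exists m : bitseq, insertion x n w u m.

End Words.

(* number of maximal blocks of consecutive `false` entries (inserted x's) *)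
Definition nblocks (m : bitseq) : nat :=
  count (fun p : bool * bool => p.1 && ~~ p.2) (zip (true :: m) m).

From HB Require Import structures.
From mathcomp Require Import all_boot.

(* Commutators being central, moving a letter x leftwards past g costs the
   factor [x, g], and [x, g h] = [x, g] [x, h].  Bringing every inserted x to
   the front therefore multiplies val(x^n w) by one commutator
   [x, val(w_{<= i})] per x inserted after the prefix w_{<= i}.  Conversely,
   x^(k 0) w_1 x^(k 1) ... w_l x^(k l) has value
   val(x^n w) * prod_i [x, val(w_{<= i})]^(k i); to realise a product
   c_1 ... c_n of elements of B, let k i count the c_j whose first position in
   A is i: at most |B| of the k i are nonzero, hence at most |B| blocks. *)

Set Implicit Arguments.
Unset Strict Implicit.
Unset Printing Implicit Defensive.

Lemma iota0S n : iota 0 n.+1 = 0 :: [seq i.+1 | i <- iota 0 n].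
Proof. by rewrite -(iotaDl 1 0). Qed.

(* Marks the letters of x^(k 0) w_1 x^(k 1) ... w_l x^(k l) that come from w. *)
Fixpoint insert_powers_mask (T : Type) (w : seq T) (k : nat -> nat) : bitseq :=
  nseq (k 0) false ++
  if w is _ :: w' then true :: insert_powers_mask w' (fun i => k i.+1) else [::].

Lemma nblocks_cons_true (m : bitseq) : nblocks (true :: m) = nblocks m.
Proof. by []. Qed.

Lemma nblocks_nseq_false (a : nat) (s : bitseq) :
  head true s -> nblocks (nseq a false ++ s) = (0 < a) + nblocks s.
Proof.
move=> s_head; case: a => [|a] //=; rewrite /nblocks /= add1n; congr _.+1.
by elim: a => [|a IHa] //=; case: s s_head => [|[] s].
Qed.

Lemma nblocks_insert_powers_mask (T : Type) (w : seq T) k :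
  nblocks (insert_powers_mask w k) = count (fun i => 0 < k i) (iota 0 (size w).+1).
Proof.
elim: w k => [|y w IHw] k; rewrite [insert_powers_mask _ _]/= nblocks_nseq_false //.
rewrite nblocks_cons_true IHw [in RHS]iota0S -cat1s count_cat count_map.
by congr (_ + _); rewrite /= addn0.
Qed.

Local Open Scope group_scope.

Section Words.
Variable G : groupType.
Implicit Types (x y g h : G) (w u cs : seq G).

Lemma wval_cat s1 s2 : wval (s1 ++ s2) = wval s1 * wval s2 :> G.
Proof. by elim: s1 => [|a s IHs] /=; rewrite ?mul1g // IHs mulgA. Qed.

Lemma wval_nseq n x : wval (nseq n x) = x ^+ n.
Proof. by elim: n => [|n IHn] //=; rewrite IHn expgS. Qed.

Definition central (c : G) := forall z, commute c z.

Lemma centralX c n : central c -> central (c ^+ n).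
Proof. by move=> cc z; apply/commute_sym/commuteX/commute_sym. Qed.

Lemma wval_map_mull c cs :
  central c -> wval [seq c * d | d <- cs] = c ^+ size cs * wval cs.
Proof.
move=> cc; elim: cs => [|d cs IHcs] /=; first by rewrite mulg1.
by rewrite IHcs expgS -!mulgA (mulgA d) -(centralX _ cc) !mulgA.
Qed.

Lemma prodgXMl_central (I : eqType) (r : seq I) c (a : I -> G) (k : I -> nat) :
  central c ->
  \prod_(i <- r) (c * a i) ^+ k i =
    c ^+ (\sum_(i <- r) k i) * \prod_(i <- r) a i ^+ k i.
Proof.
move=> cc; rewrite (eq_bigr (fun i => c ^+ k i * a i ^+ k i)) => [|i _]; last exact: expgMn.
by rewrite prodgM_commute ?prodgXr // => i j _ _; apply: centralX.
Qed.

Lemma commute_nth (A : seq G) i j :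
  {in A &, forall a b, commute a b} -> commute (nth 1 A i) (nth 1 A j).
Proof.
move=> cA; have [iA|/(nth_default 1)->] := ltnP i (size A); last exact/commute_sym/commute1.
have [jA|/(nth_default 1)->] := ltnP j (size A); last exact: commute1.
exact: cA (mem_nth 1 iA) (mem_nth 1 jA).
Qed.

(* Elements of cs are counted at the position of their first occurrence in A,
   so repeated entries of A do not count twice. *)
Definition index_mult (A cs : seq G) (i : nat) : nat :=
  count (fun c => index c A == i) cs.

Lemma index_mult_cons A c cs i :
  index_mult A (c :: cs) i = (i == index c A) + index_mult A cs i.
Proof. by rewrite /index_mult /= eq_sym. Qed.

Lemma prod_index_mult (A cs : seq G) :
  {in A &, forall a b, commute a b} -> all (fun c => c \in A) cs ->
  \prod_(0 <= i < size A) nth 1 A i ^+ index_mult A cs i = wval cs.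
Proof.
move=> cA; elim: cs => [|c cs IHcs]; first by move=> _; rewrite big1.
case/andP=> cAc /IHcs {}IHcs; under eq_bigr do rewrite index_mult_cons expgnDr.
rewrite prodgM_commute => [|i j _ _]; last exact/commuteX2/commute_nth.
rewrite IHcs; congr (_ * _).
under eq_bigr do rewrite expgb; rewrite -big_mkcond big_nat1_eq /=.
by rewrite index_mem cAc nth_index.
Qed.

Lemma sum_index_mult (A cs : seq G) :
  all (fun c => c \in A) cs -> \sum_(0 <= i < size A) index_mult A cs i = size cs.
Proof.
elim: cs => [|c cs IHcs]; first by move=> _; rewrite big1.
case/andP=> cAc /IHcs {}IHcs; under eq_bigr do rewrite index_mult_cons.
by rewrite big_split /= IHcs -big_mkcond /= big_nat1_eq index_mem cAc.
Qed.

Lemma count_index_mult_gt0 (A B cs : seq G) L :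
  all (fun c => c \in B) cs ->
  count (fun i => 0 < index_mult A cs i) (iota 0 L) <= size B.
Proof.
move=> csB; rewrite -size_filter -(size_map (index^~ A) B).
apply: uniq_leq_size => [|i]; first by rewrite filter_uniq // iota_uniq.
rewrite mem_filter -has_count => /andP[/hasP[c csc /eqP <-] _].
exact/map_f/(allP csB).
Qed.

Lemma insertion_nil x : insertion x 0 [::] [::] [::].
Proof. by []. Qed.

Lemma insertion_keep x n w u m y :
  insertion x n w u m -> insertion x n (y :: w) (y :: u) (true :: m).
Proof.
case=> size_m mask_m count_m xs_m; split; rewrite /= ?size_m ?mask_m //.
by case=> [|i] //=; apply: xs_m.
Qed.

Lemma insertion_skip x n w u m :
  insertion x n w u m -> insertion x n.+1 w (x :: u) (false :: m).
Proof.
case=> size_m mask_m count_m xs_m; split; rewrite /= ?size_m ?mask_m ?count_m //.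
by case=> [|i] //=; apply: xs_m.
Qed.

Lemma insertion_nseq x a n w u m :
  insertion x n w u m -> insertion x (a + n) w (nseq a x ++ u) (nseq a false ++ m).
Proof. by move=> ins; elim: a => [|a IHa] //=; apply: insertion_skip. Qed.

Lemma insertion_behead x n w a u b m :
  insertion x n w (a :: u) (b :: m) -> insertion x (count negb m) (mask m u) u m.
Proof. by case=> [[size_m] _ _ xs_m]; split=> // i; apply: (xs_m i.+1). Qed.

Fixpoint insert_powers x w (k : nat -> nat) : seq G :=
  nseq (k 0) x ++
  if w is y :: w' then y :: insert_powers x w' (fun i => k i.+1) else [::].

Lemma insertion_insert_powers x w k :
  insertion x (\sum_(0 <= i < (size w).+1) k i) w
    (insert_powers x w k) (insert_powers_mask w k).
Proof.
elim: w k => [|y w IHw] k /=.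
  by rewrite big_nat1; have := insertion_nseq (k 0) (insertion_nil x); rewrite addn0.
by rewrite big_nat_recl //; apply/insertion_nseq/insertion_keep.
Qed.

Lemma pcommx1 x : pcomm x 1 = 1.
Proof. exact: comm1g. Qed.

Lemma pcommC x g : g * x = x * g * pcomm x g.
Proof. exact: commgC. Qed.

Lemma size_Aset x w : size (Aset x w) = (size w).+1.
Proof. by rewrite size_map size_iota. Qed.

Lemma nth_Aset x w i : i <= size w -> nth 1 (Aset x w) i = pcomm x (wval (take i w)).
Proof. by move=> le_iw; rewrite (nth_map 0%N) ?size_iota // nth_iota. Qed.

Lemma mem1_Aset x w : 1 \in Aset x w.
Proof. by apply/mapP; exists 0%N; rewrite ?mem_iota // take0 pcommx1. Qed.

Hypothesis G2 : class_le2 G.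

Lemma pcomm_central x g : central (pcomm x g).
Proof. exact: G2. Qed.

Lemma pcommM x g h : pcomm x (g * h) = pcomm x g * pcomm x h.
Proof.
apply: (@mulgI _ (x * (g * h))); rewrite -pcommC -mulgA (pcommC x h) !mulgA.
by rewrite (pcommC x g) -(mulgA (x * g)) (pcomm_central x g h) !mulgA.
Qed.

Lemma pcommXC x g n : g * x ^+ n = x ^+ n * g * pcomm x g ^+ n.
Proof.
elim: n => [|n IHn]; first by rewrite !expg0 mul1g !mulg1.
rewrite expgSr mulgA IHn -mulgA (centralX n (pcomm_central x g) x).
by rewrite mulgA -(mulgA (x ^+ n)) (pcommC x g) expgS !mulgA.
Qed.

Lemma Aset_cons x y w : Aset x (y :: w) = 1 :: [seq pcomm x y * c | c <- Aset x w].
Proof.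
rewrite /Aset iota0S map_cons -!map_comp take0 pcommx1; congr cons.
by apply: eq_map => i /=; rewrite pcommM.
Qed.

Lemma insertion_coset x n w u m : insertion x n w u m ->
  in_coset_pow (wval u) (wval (nseq n x ++ w)) (Aset x w) n.
Proof.
elim: u m w n => [|a u IHu] [|b m] w n ins; try by case: ins.
  by case: ins => _ <- <- _; exists [::]; split=> //=; rewrite !mulg1.
have /IHu[cs [size_cs csA wval_u]] := insertion_behead ins.
case: b ins => [] [_ <- <- xs_m] /=; rewrite wval_u.
- exists [seq pcomm x a * c | c <- cs]; split; first by rewrite size_map.
    rewrite all_map; apply: sub_all csA => c cA /=.
    by rewrite Aset_cons inE map_f ?orbT.
  rewrite add0n wval_map_mull ?size_cs; last exact: pcomm_central.
  rewrite !wval_cat wval_nseq /= !mulgA pcommXC -!mulgA.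
  congr (_ * (_ * _)); rewrite !mulgA; congr (_ * _).
  exact: centralX (pcomm_central x a) _.
- have -> : a = x by apply: (xs_m 0%N).
  exists (1 :: cs); split=> /=; rewrite ?mem1_Aset ?size_cs //.
  by rewrite mulgA mul1g.
Qed.

Lemma wval_insert_powers x w k :
  wval (insert_powers x w k) =
    wval (nseq (\sum_(0 <= i < (size w).+1) k i) x ++ w) *
    \prod_(0 <= i < (size w).+1) pcomm x (wval (take i w)) ^+ k i.
Proof.
elim: w k => [|y w IHw] k; first by rewrite /= !big_nat1 pcommx1 expg1n !mulg1.
rewrite [insert_powers _ _ _]/= !(big_nat_recl (size w).+1) // take0 pcommx1 expg1n mul1g.
rewrite (eq_bigr (fun i => (pcomm x y * pcomm x (wval (take i w))) ^+ k i.+1)) => [|i _];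
  last by rewrite -pcommM.
rewrite prodgXMl_central; last exact: pcomm_central.
rewrite !wval_cat !wval_nseq /= IHw wval_cat wval_nseq expgnDr.
rewrite -!mulgA [in LHS](mulgA y) (pcommXC x y) -!mulgA.
congr (_ * (_ * (_ * _))); rewrite !mulgA; congr (_ * _).
exact: centralX (pcomm_central x y) _.
Qed.

End Words.

Theorem mainTheorem4 (G : groupType) (hG : class_le2 G)
    (w : seq G) (x : G) (n : nat) (u : seq G) :
  inserted x n w u ->
  in_coset_pow (wval u) (wval (nseq n x ++ w)) (Aset x w) n /\
  (forall B : seq G, uniq B -> {subset B <= Aset x w} ->
     in_coset_pow (wval u) (wval (nseq n x ++ w)) B n ->
     exists (u' : seq G) (m' : bitseq),
       [/\ insertion x n w u' m', nblocks m' <= size B & wval u' = wval u]).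
Proof.
case=> m ins; split; first exact: (insertion_coset hG ins).
move=> B _ sBA [cs [size_cs csB ->]].
have csA : all (fun c => c \in Aset x w) cs by apply: sub_all csB => c /sBA.
pose k := index_mult (Aset x w) cs.
have sum_k : \sum_(0 <= i < (size w).+1) k i = n.
  by rewrite -(size_Aset x) sum_index_mult.
exists (insert_powers x w k), (insert_powers_mask w k); split.
- by rewrite -sum_k; apply: insertion_insert_powers.
- by rewrite nblocks_insert_powers_mask; apply: count_index_mult_gt0.
rewrite (wval_insert_powers hG) sum_k -(prod_index_mult _ csA) ?size_Aset; last first.
  by move=> a b /mapP[i _ ->] _; apply: pcomm_central.
by congr (_ * _); apply: eq_big_nat => i /andP[_ le_iw]; rewrite nth_Aset.
Qed.
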